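(* For conjunctive guarded systems of type $(A,B)$: for all $n\ge1$, if $(A,B)^{(1,n)}$ has a deadlock then $(A,B)^{(1,n+1)}$ has a deadlock.
   Context: A process template is $U=(Q_U,\mathit{init}_U,\Sigma_U,\delta_U)$ with finite states $Q_U$, initial state $\mathit{init}_U$, finite input alphabet $\Sigma_U$ and guarded transitions $\delta_U\subseteq Q_U\times\Sigma_U\times 2^{Q_A\cup Q_B}\times Q_U$; templates $A,B$ have disjoint state sets and disjoint alphabets. The system $(A,B)^{(1,n)}$ consists of one copy of $A$ and $n$ copies $B_1,\dots,B_n$ of $B$; a global state $s$ gives each process a local state, a global input $e$ gives each process an input letter, and initially all processes are in their initial states. In a conjunctive system a guard $g$ is satisfied for process $p$ in $s$ iff every process $p'\ne p$ has $s(p')\in g$, and $\mathit{init}_A,\mathit{init}_B$ belong to every guard. A local transition $(q,\sigma,g,q')$ of $p$ is enabled for $(s,e)$ if $s(p)=q$, $e(p)=\sigma$ and $g$ is satisfied for $p$ in $s$; a process is enabled if one of its transitions is; a global step changes the state of exactly one process along an enabled transition. A path is a sequence of configurations $(s_1,e_1,p_1),(s_2,e_2,p_2),\dots$ where $p_t$ makes the step from $s_t$ to $s_{t+1}$ under $e_t$, a configuration $(s,e,\bot)$ occurs (as the last one) exactly when all processes are disabled, and $e_{t+1}(p)=e_t(p)$ for every process $p$ not moving at moment $t$. A run is a maximal path from the initial state. A run is globally deadlocked if it is finite; an infinite run is locally deadlocked if some process is disabled at all moments from some moment on; a system has a deadlock if it has a globally or locally deadlocked run. *)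

From mathcomp Require Import all_boot.
Set Implicit Arguments. Unset Strict Implicit. Unset Printing Implicit Defensive.

Section Conj.
(* State sets Q_A, Q_B (disjoint: combined as the sum QA + QB),
   alphabets S_A, S_B, initial states, guarded transition relations. *)
Variables (QA QB SA SB : finType).
Variables (initA : QA) (initB : QB).
Variable deltaA : {set QA * SA * {set QA + QB} * QA}.
Variable deltaB : {set QB * SB * {set QA + QB} * QB}.

Definition init_in_guards : Prop :=
  (forall q a g q', (q, a, g, q') \in deltaA -> inl initA \in g /\ inr initB \in g) /\
  (forall q b g q', (q, b, g, q') \in deltaB -> inl initA \in g /\ inr initB \in g).

Variable n : nat.

(* Processes: None = the copy of A, Some i = B_(i+1). *)
Definition proc := option 'I_n.

Record gstate := GState { stA : QA; stB : 'I_n -> QB }.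
Record ginput := GInput { inA : SA; inB : 'I_n -> SB }.

Definition init_state : gstate := GState initA (fun _ => initB).

Definition loc (s : gstate) (p : proc) : QA + QB :=
  match p with None => inl (stA s) | Some i => inr (stB s i) end.

Definition guard_sat (g : {set QA + QB}) (p : proc) (s : gstate) : Prop :=
  forall p', p' <> p -> loc s p' \in g.

Definition enabled_tr (s : gstate) (e : ginput) (p : proc) (g : {set QA + QB})
    (q' : QA + QB) : Prop :=
  match p with
  | None => exists qa', q' = inl qa' /\
            (stA s, inA e, g, qa') \in deltaA /\ guard_sat g None s
  | Some i => exists qb', q' = inr qb' /\
            (stB s i, inB e i, g, qb') \in deltaB /\ guard_sat g (Some i) s
  end.

Definition proc_enabled (s : gstate) (e : ginput) (p : proc) : Prop :=
  exists g q', enabled_tr s e p g q'.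

Definition all_disabled (s : gstate) (e : ginput) : Prop :=
  forall p, ~ proc_enabled s e p.

Definition gstep (s : gstate) (e : ginput) (p : proc) (s' : gstate) : Prop :=
  (exists g, enabled_tr s e p g (loc s' p)) /\
  (forall p', p' <> p -> loc s' p' = loc s p').

Definition inp (e : ginput) (p : proc) : SA + SB :=
  match p with None => inl (inA e) | Some i => inr (inB e i) end.

(* configuration (s, e, p) with p = None standing for ⊥ *)
Definition config := (gstate * ginput * option proc)%type.

(* A run is encoded as r : nat -> config; if some configuration has ⊥,
   the run is finite and ends at the first such configuration (later entries
   are irrelevant and unconstrained).  Maximality is automatic: ⊥ occurs
   exactly when all processes are disabled. *)
Definition is_run (r : nat -> config) : Prop :=
  (r 0).1.1 = init_state /\
  forall t, (forall t', t' < t -> (r t').2 <> None) ->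
    ((r t).2 = None <-> all_disabled (r t).1.1 (r t).1.2) /\
    (forall p, (r t).2 = Some p ->
       gstep (r t).1.1 (r t).1.2 p (r t.+1).1.1 /\
       (forall p', p' <> p -> inp (r t.+1).1.2 p' = inp (r t).1.2 p')).

Definition globally_deadlocked (r : nat -> config) : Prop :=
  exists t, (r t).2 = None.

Definition locally_deadlocked (r : nat -> config) : Prop :=
  (forall t, (r t).2 <> None) /\
  exists p t0, forall t, t0 <= t -> ~ proc_enabled (r t).1.1 (r t).1.2 p.

Definition has_deadlock : Prop :=
  exists r, is_run r /\ (globally_deadlocked r \/ locally_deadlocked r).

End Conj.

(* Add a copy B_(n+1) that sits in init_B with a fixed input. Since init_B
   belongs to every guard, B_(n+1) changes the enabledness of no other
   process, so every run of (A,B)^(1,n) lifts to (A,B)^(1,n+1) with B_(n+1)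
   idle, and a local deadlock lifts verbatim. At a global deadlock all old
   processes are disabled, and they stay disabled while only B_(n+1) moves,
   because enabledness of an old process only depends on the old processes.
   Letting B_(n+1) run alone then ends either in a global deadlock or in an
   infinite run in which A is locally deadlocked. *)

From mathcomp Require Import all_boot.
From Stdlib Require Import ClassicalEpsilon FunctionalExtensionality.

Set Implicit Arguments. Unset Strict Implicit. Unset Printing Implicit Defensive.

Section Runs.
Variables (QA QB SA SB : finType) (initA : QA) (initB : QB).
Variable deltaA : {set QA * SA * {set QA + QB} * QA}.
Variable deltaB : {set QB * SB * {set QA + QB} * QB}.
Variable m : nat.

Definition run_step (c : config QA QB SA SB m) (s' : gstate QA QB m)
    (e' : ginput SA SB m) : Prop :=
  (c.2 = None <-> all_disabled deltaA deltaB c.1.1 c.1.2) /\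
  (forall p, c.2 = Some p ->
     gstep deltaA deltaB c.1.1 c.1.2 p s' /\
     (forall p', p' <> p -> inp e' p' = inp c.1.2 p')).

Lemma is_runE (r : nat -> config QA QB SA SB m) :
  is_run initA initB deltaA deltaB r <->
  (r 0).1.1 = init_state initA initB m /\
  forall t, (forall t', t' < t -> (r t').2 <> None) ->
    run_step (r t) (r t.+1).1.1 (r t.+1).1.2.
Proof. exact: iff_refl. Qed.

Lemma is_run_splice (r1 r2 : nat -> config QA QB SA SB m) T :
  (r1 0).1.1 = init_state initA initB m ->
  (forall t, t < T -> run_step (r1 t) (r1 t.+1).1.1 (r1 t.+1).1.2) ->
  (r2 0).1 = (r1 T).1 ->
  (forall k, run_step (r2 k) (r2 k.+1).1.1 (r2 k.+1).1.2) ->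
  is_run initA initB deltaA deltaB (fun t => if t < T then r1 t else r2 (t - T)).
Proof.
move=> init1 step1 r2_0 step2; apply/is_runE; split.
  by case: T step1 r2_0 => [|T] //= _ ->.
move=> t _ /=; case: (ltnP t.+1 T) => [lt_t1T | le_Tt1].
  by have lt_tT := ltnW lt_t1T; rewrite lt_tT; exact: step1.
case: (ltnP t T) => [lt_tT | le_Tt].
  have eq_T : T = t.+1 by apply/eqP; rewrite eqn_leq le_Tt1 lt_tT.
  by move: r2_0; rewrite eq_T subnn => ->; apply: step1; rewrite -eq_T.
by rewrite subSn //; exact: step2.
Qed.

Lemma first_halt (r : nat -> config QA QB SA SB m) :
  globally_deadlocked r ->
  exists2 T, (r T).2 = None & forall t, t < T -> (r t).2 <> None.
Proof.
case=> t0 halt_t0.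
have ex_halt : exists t, (r t).2 == None by exists t0; rewrite halt_t0.
case: (ex_minnP ex_halt) => T /eqP halt_T minT.
exists T => // t lt_tT /eqP halt_t.
by have := minT t halt_t; rewrite leqNgt lt_tT.
Qed.

Lemma enabled_tr_initB (s : gstate QA QB m) (e : ginput SA SB m) p g q' :
  init_in_guards initA initB deltaA deltaB ->
  enabled_tr deltaA deltaB s e p g q' -> inr initB \in g.
Proof.
case=> initA_guards initB_guards; case: p => [i|] [q [_ [tr_q _]]].
  exact: (initB_guards _ _ _ _ tr_q).2.
exact: (initA_guards _ _ _ _ tr_q).2.
Qed.

End Runs.

Section Extension.
Variables (QA QB SA SB : finType) (initA : QA) (initB : QB).
Variable deltaA : {set QA * SA * {set QA + QB} * QA}.
Variable deltaB : {set QB * SB * {set QA + QB} * QB}.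
Hypothesis init_guards : init_in_guards initA initB deltaA deltaB.
Variable n : nat.

Local Notation enabled := (proc_enabled deltaA deltaB).

Definition new_proc : proc n.+1 := Some ord_max.
Definition widen_proc (p : proc n) : proc n.+1 := omap (lift ord_max) p.

Variant extended_proc_spec : proc n.+1 -> Type :=
  | ExtendedProcNew : extended_proc_spec new_proc
  | ExtendedProcWiden p : extended_proc_spec (widen_proc p).

Lemma extended_procP x : extended_proc_spec x.
Proof.
case: x => [i|]; last exact: (ExtendedProcWiden None).
case: (unliftP ord_max i) => [j ->|->]; last exact: ExtendedProcNew.
exact: (ExtendedProcWiden (Some j)).
Qed.

Lemma widen_proc_inj : injective widen_proc.
Proof. by move=> [i|] [j|] // /Some_inj /lift_inj ->. Qed.

Lemma widen_proc_neq_new p : widen_proc p <> new_proc.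
Proof.
by case: p => [i|] // /Some_inj eq_i; move: (neq_lift ord_max i); rewrite eq_i eqxx.
Qed.

Lemma forall_other_widen (P : proc n.+1 -> Prop) p :
  (forall x, x <> widen_proc p -> P x) <->
  P new_proc /\ forall p', p' <> p -> P (widen_proc p').
Proof.
split=> [allP | [P_new allP] x].
  split; first by apply: allP => /esym /widen_proc_neq_new.
  by move=> p' ne_p'p; apply: allP => /widen_proc_inj.
case: (extended_procP x) => // p' ne_p'p.
by apply: allP => eq_p'p; apply: ne_p'p; rewrite eq_p'p.
Qed.

Definition restrict_state (S : gstate QA QB n.+1) : gstate QA QB n :=
  GState (stA S) (stB S \o lift ord_max).
Definition restrict_input (E : ginput SA SB n.+1) : ginput SA SB n :=
  GInput (inA E) (inB E \o lift ord_max).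

Definition extend_state (s : gstate QA QB n) (q : QB) : gstate QA QB n.+1 :=
  GState (stA s) (fun i => if unlift ord_max i is Some j then stB s j else q).
Definition extend_input (e : ginput SA SB n) (b : SB) : ginput SA SB n.+1 :=
  GInput (inA e) (fun i => if unlift ord_max i is Some j then inB e j else b).

Lemma loc_restrict S p : loc (restrict_state S) p = loc S (widen_proc p).
Proof. by case: p. Qed.

Lemma loc_extend s q p : loc (extend_state s q) (widen_proc p) = loc s p.
Proof. by case: p => [i|] //=; rewrite liftK. Qed.

Lemma loc_extend_new s q : loc (extend_state s q) new_proc = inr q.
Proof. by rewrite /= unlift_none. Qed.

Lemma inp_extend e b p : inp (extend_input e b) (widen_proc p) = inp e p.
Proof. by case: p => [i|] //=; rewrite liftK. Qed.

Lemma inp_extend_new e b : inp (extend_input e b) new_proc = inr b.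
Proof. by rewrite /= unlift_none. Qed.

Lemma extend_stateK q : cancel (extend_state^~ q) restrict_state.
Proof.
case=> a f; congr GState.
by apply: functional_extensionality => i /=; rewrite liftK.
Qed.

Lemma extend_inputK b : cancel (extend_input^~ b) restrict_input.
Proof.
case=> a f; congr GInput.
by apply: functional_extensionality => i /=; rewrite liftK.
Qed.

Lemma extend_init_state :
  extend_state (init_state initA initB n) initB = init_state initA initB n.+1.
Proof. by congr GState; apply: functional_extensionality => i; case: unlift. Qed.

Lemma guard_sat_restrict g p S :
  guard_sat g (widen_proc p) S -> guard_sat g p (restrict_state S).
Proof. by case/forall_other_widen=> _ sat_old p' /sat_old; rewrite loc_restrict. Qed.

Lemma guard_sat_extend g p s q :
  guard_sat g p s -> inr q \in g -> guard_sat g (widen_proc p) (extend_state s q).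
Proof.
move=> sat_old q_in_g; apply/forall_other_widen.
rewrite loc_extend_new; split=> // p'.
by rewrite loc_extend; exact: sat_old.
Qed.

Lemma enabled_tr_restrict S E p g q' :
  enabled_tr deltaA deltaB S E (widen_proc p) g q' ->
  enabled_tr deltaA deltaB (restrict_state S) (restrict_input E) p g q'.
Proof.
case: p => [i|] [q [-> [tr_q sat_g]]]; exists q; do 2!split=> //.
  exact: (guard_sat_restrict (p := Some i)).
exact: (guard_sat_restrict (p := None)).
Qed.

Lemma proc_enabled_restrict S E p :
  enabled S E (widen_proc p) -> enabled (restrict_state S) (restrict_input E) p.
Proof. by case=> g [q' tr]; exists g, q'; exact: enabled_tr_restrict. Qed.

Lemma enabled_tr_extend s e b p g q' :
  enabled_tr deltaA deltaB s e p g q' ->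
  enabled_tr deltaA deltaB (extend_state s initB) (extend_input e b) (widen_proc p)
    g q'.
Proof.
move=> tr; have initB_g := enabled_tr_initB init_guards tr.
case: p tr => [i|] [q [-> [tr_q sat_g]]]; exists q; split=> //=.
  by rewrite !liftK; split=> //; exact: (guard_sat_extend (p := Some i)).
by split=> //; exact: (guard_sat_extend (p := None)).
Qed.

Lemma proc_enabled_extend s e b p :
  enabled s e p ->
  enabled (extend_state s initB) (extend_input e b) (widen_proc p).
Proof. by case=> g [q' tr]; exists g, q'; exact: enabled_tr_extend. Qed.

Lemma gstep_extend s e b p s' :
  gstep deltaA deltaB s e p s' ->
  gstep deltaA deltaB (extend_state s initB) (extend_input e b) (widen_proc p)
    (extend_state s' initB).
Proof.
case=> [[g tr] frame]; split.
  by exists g; rewrite loc_extend; exact: enabled_tr_extend.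
apply/forall_other_widen; rewrite !loc_extend_new; split=> // p' ne_p'p.
by rewrite !loc_extend; exact: frame.
Qed.

Section SoloRun.
Variables (S0 : gstate QA QB n.+1) (E : ginput SA SB n.+1).
Hypothesis old_disabled :
  all_disabled deltaA deltaB (restrict_state S0) (restrict_input E).

Definition set_new_state (S : gstate QA QB n.+1) (q : QB) : gstate QA QB n.+1 :=
  GState (stA S) (fun i => if i == ord_max then q else stB S i).

Lemma loc_set_new_state S q p :
  p <> new_proc -> loc (set_new_state S q) p = loc S p.
Proof.
by case: p => [i|] //= ne_i; case: eqP => // eq_i; case: ne_i; rewrite eq_i.
Qed.

Lemma restrict_set_new_state S q :
  restrict_state (set_new_state S q) = restrict_state S.
Proof.
congr GState; apply: functional_extensionality => i /=.
by rewrite eq_sym (negbTE (neq_lift _ _)).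
Qed.

Definition new_successor (S : gstate QA QB n.+1) (q : QB) : Prop :=
  exists g, (stB S ord_max, inB E ord_max, g, q) \in deltaB /\
    guard_sat g new_proc S.

Definition solo_next (S : gstate QA QB n.+1) : gstate QA QB n.+1 :=
  set_new_state S (epsilon (inhabits (stB S ord_max)) (new_successor S)).

Definition solo_state k := iter k solo_next S0.

Definition solo_run k : config QA QB SA SB n.+1 :=
  (solo_state k, E,
   if excluded_middle_informative (enabled (solo_state k) E new_proc)
   then Some new_proc else None).

Lemma solo_old_disabled k p : ~ enabled (solo_state k) E (widen_proc p).
Proof.
have restrict_solo : restrict_state (solo_state k) = restrict_state S0.
  by elim: k => //= k <-; exact: restrict_set_new_state.
by move/proc_enabled_restrict; rewrite restrict_solo; exact: old_disabled.
Qed.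

Lemma gstep_solo_next S :
  enabled S E new_proc -> gstep deltaA deltaB S E new_proc (solo_next S).
Proof.
case=> g [_ [q [_ [tr_q sat_g]]]]; rewrite /solo_next; set q' := epsilon _ _.
have [g' [tr_q' sat_g']] : new_successor S q' by apply: epsilon_spec; exists q, g.
split; last exact: loc_set_new_state.
by exists g', q'; rewrite /= eqxx.
Qed.

Lemma run_step_solo k : run_step deltaA deltaB (solo_run k) (solo_state k.+1) E.
Proof.
rewrite /solo_run.
case: excluded_middle_informative => [new_enabled | new_disabled].
  split=> [| _ [<-]]; first by split=> // /(_ new_proc).
  by split; first exact: gstep_solo_next.
split=> //; split=> // _ x.
by case: (extended_procP x) => // p; exact: solo_old_disabled.
Qed.

End SoloRun.

Variable b : SB.

Definition extend_config (c : config QA QB SA SB n) : config QA QB SA SB n.+1 :=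
  (extend_state c.1.1 initB, extend_input c.1.2 b, omap widen_proc c.2).

Lemma run_step_extend c s' e' : c.2 <> None -> run_step deltaA deltaB c s' e' ->
  run_step deltaA deltaB (extend_config c)
    (extend_state s' initB) (extend_input e' b).
Proof.
case: c => [[s e] [p|]] // _ [_ /(_ p erefl) [step frame]] /=; split.
  split=> // all_dis; case: (all_dis (widen_proc p)); apply: proc_enabled_extend.
  by case: step => [[g tr] _]; exists g, (loc s' p).
move=> _ [<-]; split; first exact: gstep_extend.
apply/forall_other_widen; rewrite !inp_extend_new; split=> // p' ne_p'p.
by rewrite !inp_extend; exact: frame.
Qed.

Lemma locally_deadlocked_extend (r : nat -> config QA QB SA SB n) :
  is_run initA initB deltaA deltaB r -> locally_deadlocked deltaA deltaB r ->
  has_deadlock initA initB deltaA deltaB n.+1.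
Proof.
move=> /is_runE [init_r step_r] [running [p [t0 stuck_p]]].
exists (extend_config \o r); split.
  apply/is_runE; split; first by rewrite /= init_r extend_init_state.
  move=> t _; apply: run_step_extend (running t) (step_r t _).
  by move=> t' _; exact: running.
right; split=> [t | ]; first by rewrite /=; case: (r t).2 (running t).
exists (widen_proc p), t0 => t le_t0t /proc_enabled_restrict.
by rewrite /= extend_stateK extend_inputK; exact: stuck_p.
Qed.

Lemma globally_deadlocked_extend (r : nat -> config QA QB SA SB n) :
  is_run initA initB deltaA deltaB r -> globally_deadlocked r ->
  has_deadlock initA initB deltaA deltaB n.+1.
Proof.
move=> /is_runE [init_r step_r] /first_halt [T halt_T running].
have halted : all_disabled deltaA deltaB (r T).1.1 (r T).1.2.
  by apply/(step_r T running).1.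
pose S0 := extend_state (r T).1.1 initB; pose E := extend_input (r T).1.2 b.
have old_disabled :
    all_disabled deltaA deltaB (restrict_state S0) (restrict_input E).
  by rewrite extend_stateK extend_inputK.
pose r' t := if t < T then extend_config (r t) else solo_run S0 E (t - T).
exists r'; split.
  apply: is_run_splice => [| t lt_tT | // | k]; last exact: run_step_solo.
    by rewrite /= init_r extend_init_state.
  apply: run_step_extend (running t lt_tT) (step_r t _) => t' lt_t't.
  exact/running/(ltn_trans lt_t't).
case: (classic (exists k, (solo_run S0 E k).2 = None)) => [[k halt] | solo_forever].
  by left; exists (T + k); rewrite /r' ltnNge leq_addr addKn.
right; split=> [t | ].
  rewrite /r'; case: ltnP => [lt_tT | _].
    by rewrite /=; case: (r t).2 (running t lt_tT).
  by move=> halt; apply: solo_forever; exists (t - T).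
exists None, T => t le_Tt; rewrite /r' ltnNge le_Tt /=.
exact: (solo_old_disabled old_disabled (k := t - T) (p := None)).
Qed.

End Extension.

Theorem mainTheorem14 (QA QB SA SB : finType) (initA : QA) (initB : QB)
    (deltaA : {set QA * SA * {set QA + QB} * QA})
    (deltaB : {set QB * SB * {set QA + QB} * QB}) :
  init_in_guards initA initB deltaA deltaB ->
  forall n : nat, 1 <= n ->
    has_deadlock initA initB deltaA deltaB n ->
    has_deadlock initA initB deltaA deltaB n.+1.
Proof.
move=> init_guards n n_gt0 [r [run_r deadlock_r]].
(* [1 <= n] is needed only to have an input letter for the new copy of B. *)
have b : SB := inB (r 0).1.2 (Ordinal n_gt0).
case: deadlock_r => [halts | stuck].
  exact: (globally_deadlocked_extend init_guards b run_r halts).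
exact: (locally_deadlocked_extend init_guards b run_r stuck).
Qed.
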